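(* Let $G$ be a finite nonabelian nested group with chain of centers $G=X_0>X_1>\dots>X_n\ge1$ (so $n\ge1$). If $G/X_1$ is solvable and not nilpotent, then $G/X_1$ is a Frobenius group whose Frobenius kernel is $(G/X_1)'$.
   Context: For $\chi\in\mathrm{Irr}(G)$, $Z(\chi)=\{g\in G: |\chi(g)|=\chi(1)\}$. $G$ is nested if for all $\chi,\psi\in\mathrm{Irr}(G)$ either $Z(\chi)\le Z(\psi)$ or $Z(\psi)\le Z(\chi)$; then the distinct subgroups $Z(\chi)$, $\chi\in\mathrm{Irr}(G)$, form a chain $G=X_0>X_1>\dots>X_n\ge1$, the chain of centers. *)

From HB Require Import structures.
From mathcomp Require Import all_boot all_order all_algebra all_fingroup all_solvable all_field all_character.
Set Implicit Arguments. Unset Strict Implicit. Unset Printing Implicit Defensive.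

Definition nested (gT : finGroupType) (G : {group gT}) : Prop :=
  forall i j : Iirr G,
    ('Z(('chi[G]_i)%R)%CF \subset 'Z(('chi[G]_j)%R)%CF) \/
    ('Z(('chi[G]_j)%R)%CF \subset 'Z(('chi[G]_i)%R)%CF).

(* X1 is the second term X_1 of the chain of centers of G: the largest
   center Z(chi) (chi in Irr(G)) that is a proper subgroup of G. *)
Definition second_center (gT : finGroupType) (G : {group gT}) (X1 : {set gT}) : Prop :=
  [/\ exists i : Iirr G, X1 = 'Z(('chi[G]_i)%R)%CF,
      X1 != G &
      forall j : Iirr G, 'Z(('chi[G]_j)%R)%CF != G -> 'Z(('chi[G]_j)%R)%CF \subset X1].

From HB Require Import structures.
From mathcomp Require Import all_boot all_order all_algebra all_fingroup all_solvable all_field all_character.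

(* Let X1 be the largest proper center Z(chi), chi in Irr(G), and H = G/X1.
   The proof has a character-theoretic half and a group-theoretic half.
   1. Every nontrivial normal subgroup of H contains H'.  Indeed, a normal
      subgroup M0 of G not containing G' is an intersection of kernels, so it
      lies in ker(chi) for some nonlinear chi; then Z(chi) < G (a character
      with full center is linear), hence ker(chi) <= Z(chi) <= X1.
   2. A solvable, non-nilpotent group H in which H' lies below every
      nontrivial normal subgroup is a Frobenius group with kernel N = H'.
      N is the unique minimal normal subgroup, hence abelian and a p-group;
      C_N[g] is normal in H for g in H, so it is trivial unless g centralizes
      N.  The centralizer C = C_H(N) is a nilpotent p-group, and coprime
      action of a nontrivial p'-element h gives C = N C_C(h) with C_C(h) in
      Z(H) = 1, so C = N.  Thus C_H[x] <= N for all x in N^#.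
   The main theorem combines the two halves. *)

Set Implicit Arguments.
Unset Strict Implicit.
Unset Printing Implicit Defensive.

Local Open Scope group_scope.

Lemma cfcenter_full_der1 (gT : finGroupType) (G : {group gT}) (i : Iirr G) :
  'Z(('chi_i)%R)%CF = G -> G^`(1) \subset cfker ('chi_i)%R.
Proof.
move=> ZG; rewrite der1_min ?normal_norm ?cfker_normal //.
have := cfcenter_subset_center ('chi_i)%R; rewrite ZG => sGZ.
exact: subset_trans sGZ (subsetIr _ _).
Qed.

(* A normal subgroup not containing G' lies in the kernel of some nonlinear
   irreducible character, since normal subgroups are intersections of
   irreducible kernels. *)
Lemma normal_not_der1_cfker (gT : finGroupType) (G M : {group gT}) :
  M <| G -> ~~ (G^`(1) \subset M) ->
  exists2 i : Iirr G, M \subset cfker ('chi_i)%R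
                    & ~~ (G^`(1) \subset cfker ('chi_i)%R).
Proof.
move=> nsMG notsG'M; apply/exists_inP.
apply: contraNT notsG'M => /exists_inPn noKer.
rewrite -(cap_cfker_normal nsMG); apply/bigcapsP=> i sMK.
by rewrite -[_ \subset _]negbK noKer.
Qed.

Section SecondCenter.
Variables (gT : finGroupType) (G X1 : {group gT}).
Hypothesis X1_second : second_center G X1.

Lemma second_center_normal : X1 <| G.
Proof. by have [[i ->] _ _] := X1_second; apply: cfcenter_normal. Qed.

(* Nonlinear irreducible characters have their kernel inside X1, because
   their (proper) center is contained in X1. *)
Lemma nonlinear_cfker_sub (i : Iirr G) :
  ~~ (G^`(1) \subset cfker ('chi_i)%R) -> cfker ('chi_i)%R \subset X1.
Proof.
have [_ _ maxX1] := X1_second => nlin.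
have ZneG : 'Z(('chi_i)%R)%CF != G.
  by apply: contra nlin => /eqP/cfcenter_full_der1.
exact: subset_trans (normal_sub (cfker_center_normal _)) (maxX1 i ZneG).
Qed.

Lemma quotient_second_center_der1 (M : {group coset_of X1}) :
  M <| G / X1 -> M :!=: 1 -> (G / X1)^`(1) \subset M.
Proof.
move=> nsM ntM; apply: contraR ntM => notsG'M.
have nsX1 := second_center_normal.
have nsM1 : coset X1 @*^-1 M <| G by rewrite -(quotientGK nsX1) cosetpre_normal.
have notsG'M1 : ~~ (G^`(1) \subset coset X1 @*^-1 M).
  apply: contra notsG'M => sG'M1.
  by rewrite -quotient_der ?normal_norm // -(cosetpreK M) quotientS.
have [i sM1K nlin] := normal_not_der1_cfker nsM1 notsG'M1.
have /(quotientS X1) := subset_trans sM1K (nonlinear_cfker_sub nlin).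
by rewrite cosetpreK trivg_quotient => /trivgP ->; rewrite eqxx.
Qed.
End SecondCenter.

Section DerivedInEveryNormal.
Variables (gT : finGroupType) (H : {group gT}).
Hypotheses (solH : solvable H) (nnilH : ~~ nilpotent H).
Hypothesis der1_in_normal :
  forall M : {group gT}, M <| H -> M :!=: 1 -> H^`(1) \subset M.

Local Notation N := H^`(1).
Local Notation C := 'C_H(H^`(1)).

Let nsNH : N <| H := der_normal 1 H.

Lemma der1_neq1 : N :!=: 1.
Proof. by apply: contra nnilH => /eqP/derG1P/abelian_nil. Qed.

Lemma normal_sub_der1 (M : {group gT}) :
  M <| H -> M \subset N -> M :=: 1 \/ M :=: N.
Proof.
move=> nsMH sMN; have [-> | ntM] := eqVneq (M : {set gT}) 1; first by left.
by right; apply/eqP; rewrite eqEsubset sMN der1_in_normal.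
Qed.

(* N' is normal in H and properly contained in N (N is solvable), so N' = 1. *)
Lemma der1_abelian : abelian N.
Proof.
have nsN'H : N^`(1) <| H := char_normal_trans (der_char 1 N) nsNH.
have [/derG1P // | N'N] := normal_sub_der1 nsN'H (der_sub 1 N).
have := sol_der1_proper (solvableS (normal_sub nsNH) solH) (subxx N) der1_neq1.
by rewrite N'N properE subxx.
Qed.

(* Otherwise N <= Z(H), making H nilpotent of class at most 2. *)
Lemma center_der1_trivial : 'Z(H) = 1.
Proof.
apply/eqP; apply: contraR nnilH => ntZ; apply: small_nil_class.
by rewrite (@leq_trans 2) // nil_class2 der1_in_normal ?center_normal.
Qed.

Definition der1_prime := pdiv #|N|.
Local Notation p := der1_prime.

Lemma der1_prime_prime : prime p.
Proof. by rewrite pdiv_prime // cardG_gt1 der1_neq1. Qed.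

(* O_p(N) contains an element of order p, so it is nontrivial, hence N. *)
Lemma der1_pgroup : p.-group N.
Proof.
have nsOpH : 'O_p(N) <| H := char_normal_trans (pcore_char _ _) nsNH.
have [Op1 | <-] := normal_sub_der1 nsOpH (pcore_sub _ _); last exact: pcore_pgroup.
have [x Nx ox] := Cauchy der1_prime_prime (pdiv_dvd #|N|).
have : <[x]> \subset 'O_p(N).
  apply: pcore_max; last by rewrite -sub_abelian_normal ?cycle_subG ?der1_abelian.
  by rewrite /pgroup -orderE ox pnat_id ?der1_prime_prime.
rewrite Op1 subG1 cycle_eq1 => /eqP x1.
by have := der1_prime_prime; rewrite -ox x1 order1.
Qed.

(* As N is abelian, C_N[g] only depends on the coset gN. *)
Lemma cent1_der1_mul (g a : gT) : a \in N -> 'C_N[g * a] = 'C_N[g].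
Proof.
move=> Na; apply/setP=> y; rewrite !in_setI; apply: andb_id2l => Ny.
have cay : a \in 'C[y] by apply/cent1P; apply: (centsP der1_abelian).
by rewrite cent1C groupMr // cent1C.
Qed.

(* C_N[g]^k = C_N[g^k] = C_N[g [g, k]] = C_N[g], since [g, k] lies in N. *)
Lemma cent1_der1_normal (g : gT) : g \in H -> 'C_N[g] <| H.
Proof.
move=> Hg; apply/andP; split.
  exact: subset_trans (subsetIl _ _) (normal_sub nsNH).
apply/normsP=> k Hk.
rewrite conjIg -cent1J (normsP (normal_norm nsNH)) // conjg_mulR.
by rewrite cent1_der1_mul // derg1 mem_commg.
Qed.

(* By minimality of N, C_N[g] is trivial unless g centralizes N. *)
Lemma cent1_der1_trivial (g : gT) : g \in H -> g \notin C -> 'C_N[g] = 1.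
Proof.
move=> Hg notCg.
have [// | CNg] := normal_sub_der1 (cent1_der1_normal Hg) (subsetIl _ _).
by case/negP: notCg; rewrite inE Hg -sub_cent1 -CNg subsetIr.
Qed.

Lemma cent_der1_normal : C <| H.
Proof. exact/norm_normalI/norms_cent/normal_norm. Qed.

Lemma der1_sub_cent : N \subset C.
Proof. by rewrite subsetI (normal_sub nsNH); apply: der1_abelian. Qed.

(* C' <= H' = N <= Z(C), so C is nilpotent of class at most 2. *)
Lemma cent_der1_nilpotent : nilpotent C.
Proof.
apply: small_nil_class; rewrite (@leq_trans 2) // nil_class2 subsetI der_sub /=.
apply: subset_trans (dergS 1 (normal_sub cent_der1_normal)) _.
by rewrite centsC subsetIr.
Qed.

(* O_p'(C) is normal in H; if nontrivial it would contain the p-group N. *)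
Lemma cent_der1_pgroup : p.-group C.
Proof.
have nsOH : 'O_p^'(C) <| H := char_normal_trans (pcore_char _ _) cent_der1_normal.
have Op'1 : 'O_p^'(C) = 1.
  apply/eqP; apply: contraT => ntO.
  have p'N : p^'.-group N := pgroupS (der1_in_normal nsOH ntO) (pcore_pgroup _ _).
  by have := pgroupP p'N p der1_prime_prime (pdiv_dvd _); rewrite !inE eqxx.
have := nilpotent_pcoreC p cent_der1_nilpotent; rewrite Op'1 dprodg1 => defC.
by rewrite -defC pcore_pgroup.
Qed.

(* H is not a p-group (it is not nilpotent), so it has a nontrivial
   p'-element (of prime order q, a prime divisor of |H|_p'). *)
Lemma exists_p'elt : exists2 h, h \in H & p^'.-elt h && (h != 1).
Proof.
have p'part_gt1 : 1 < #|H|`_p^'.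
  rewrite ltn_neqAle part_gt0 andbT eq_sym partG_eq1 pgroupNK.
  by apply: contra nnilH; apply: pgroup_nil.
have q_pr := pdiv_prime p'part_gt1.
have [h Hh oh] := Cauchy q_pr (dvdn_trans (pdiv_dvd _) (dvdn_part _ _)).
exists h => //; rewrite -order_gt1 /p_elt oh pnatE // prime_gt1 // andbT.
by apply: (pnatPpi (part_pnat p^' #|H|)); rewrite pi_pdiv.
Qed.

Lemma p'elt_notin_cent (h : gT) : p^'.-elt h -> h != 1 -> h \notin C.
Proof.
move=> p'h; apply: contra => Ch; rewrite -order_eq1; apply/eqP.
exact: pnat_1 (mem_p_elt cent_der1_pgroup Ch) p'h.
Qed.

(* An element z of C commuting with a nontrivial p'-element h is central:
   [z, k] lies in N and centralizes h^k, which lies outside C. *)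
Lemma cent_der1_commute_center (h z : gT) :
  h \in H -> p^'.-elt h -> h != 1 -> z \in C -> commute z h -> z \in 'Z(H).
Proof.
move=> Hh p'h nth /setIP[Hz cNz] czh; rewrite inE Hz; apply/centP=> k Hk.
have Nzk : [~ z, k] \in N by rewrite derg1 mem_commg.
have czhk : commute z (h ^ k).
  rewrite conjg_mulR; apply: commuteM => //.
  by apply: (centP cNz); rewrite derg1 mem_commg.
have : [~ z, k] \in 'C_N[h ^ k].
  rewrite inE Nzk; apply/cent1P; rewrite commgEl.
  apply: commute_sym; apply: commuteM; first exact/commuteV/commute_sym.
  by rewrite /commute -!conjMg czh.
have notChk : h ^ k \notin C by apply: p'elt_notin_cent; rewrite ?p_eltJ ?conjg_eq1.
by rewrite (cent1_der1_trivial (groupJ Hh Hk) notChk) => /set1P/eqP/commgP.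
Qed.

(* Coprime action of <h> on N gives C/N = C_C(h)N/N (H/N is abelian),
   and C_C(h) <= Z(H) = 1, whence C = N. *)
Lemma cent_der1_eq : C = N.
Proof.
apply/eqP; rewrite eqEsubset der1_sub_cent andbT.
have [h Hh /andP[p'h nth]] := exists_p'elt.
have sCH := normal_sub cent_der1_normal.
have nNH := normal_norm nsNH.
have nNh : <[h]> \subset 'N(N) by rewrite cycle_subG (subsetP nNH).
have nCh : <[h]> \subset 'N(C).
  by rewrite cycle_subG (subsetP (normal_norm cent_der1_normal)).
have coNh : coprime #|N| #|<[h]>|.
  by rewrite -orderE (pnat_coprime der1_pgroup).
have abHN : abelian (H / N) := sub_der1_abelian (subxx _).
have CNh : 'C_C(<[h]>) / N = C / N.
  rewrite coprime_norm_quotient_cent ?(abelian_sol der1_abelian) //.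
  apply/setIidPl/(centSS (quotientS _ sCH) (quotientS _ _) abHN).
  by rewrite cycle_subG.
have : C \subset N * 'C_C(<[h]>).
  by rewrite -quotientSK ?(subset_trans sCH nNH) // CNh.
suff -> : 'C_C(<[h]>) = 1 by rewrite mulg1.
apply/trivgP; rewrite -center_der1_trivial; apply/subsetP=> z /setIP[Cz chz].
apply: cent_der1_commute_center Hh p'h nth Cz _.
by apply: (centP chz); apply: cycle_id.
Qed.

(* H is a Frobenius group with kernel N: for x in N^#, an element g of
   C_H[x] has C_N[g] nontrivial, so g lies in C = N. *)
Theorem Frobenius_der1 : [Frobenius H with kernel N].
Proof.
apply/Frobenius_kerP; split.
- exact: der1_neq1.
- by rewrite (sol_der1_proper solH) // (subG1_contra (der_sub 1 H) der1_neq1).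
- exact: nsNH.
move=> x /setD1P[ntx Nx]; apply/subsetP=> g /setIP[Hg cxg].
suff : g \in C by rewrite cent_der1_eq.
apply: contraR ntx => notCg.
suff : x \in 'C_N[g] by rewrite cent1_der1_trivial // => /set1P->.
by rewrite in_setI Nx cent1C.
Qed.
End DerivedInEveryNormal.

Theorem mainTheorem13 (gT : finGroupType) (G X1 : {group gT}) :
  nested G -> ~~ abelian G -> second_center G X1 ->
  solvable (G / X1) -> ~~ nilpotent (G / X1) ->
  [Frobenius (G / X1) with kernel (G / X1)^`(1)]%g.
Proof.
move=> _ _ X1_second solGX1 nnilGX1.
exact: Frobenius_der1 solGX1 nnilGX1 (quotient_second_center_der1 X1_second).
Qed.
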